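(* Let $K$ be any field with involution, and let $T=L_K(E_T)$ be the Toeplitz algebra, where $E_T$ is the graph with two vertices $u,v$, one loop at $v$, and one edge from $v$ to $u$. Then $T$ is not $*$-symmetric, and for every integer $n>1$ the ring $\mathbb M_n(T)$ (a Rickart ring, being the Leavitt path algebra of a graph with finitely many vertices) is not a Rickart $*$-ring.
   Context: $L_K(E_T)$ is generated by $u,v,c,f,c^*,f^*$ ($c$ the loop at $v$, $f$ the edge $v\to u$) subject to the Leavitt path algebra relations: $u,v$ orthogonal idempotents; $vc=cv=c$, $vf=fu=f$; $c^*v=vc^*=c^*$, $uf^*=f^*v=f^*$; $c^*c=v$, $f^*f=u$, $c^*f=f^*c=0$; $v=cc^*+ff^*$. It has identity $u+v$ and the involution $(\sum k_ipq^* )^*=\sum k_i^*qp^*$. A unital $*$-ring is $*$-symmetric if $1+xx^*$ is invertible for all $x$. $\mathbb M_n(T)$ carries the $*$-transpose involution $(a_{ij})^*=(a_{ji}^* )$. A Rickart $*$-ring is a $*$-ring in which the right annihilator of each element is generated by a projection ($p=p^2=p^*$); a Rickart ring is one in which left and right annihilators of each element are generated by idempotents. *)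

From HB Require Import structures.
From mathcomp Require Import all_boot all_order all_algebra.
Set Implicit Arguments. Unset Strict Implicit. Unset Printing Implicit Defensive.
Import GRing.Theory.
Local Open Scope ring_scope.

(* Defining relations of the Leavitt path algebra L_K(E_T) of the Toeplitz
   graph E_T (vertices u, v; loop c at v; edge f : v -> u), with ghost edges
   cs = c^*, fs = f^*, in an arbitrary ring A; plus unitality 1 = u + v. *)
Definition toeplitz_rels (A : pzRingType) (u v c f cs fs : A) : Prop :=
  [/\ [/\ u * u = u, v * v = v, u * v = 0 & v * u = 0],
      [/\ v * c = c, c * v = c, v * f = f & f * u = f],
      [/\ cs * v = cs, v * cs = cs, u * fs = fs & fs * v = fs],
      [/\ cs * c = v, fs * f = u, cs * f = 0 & fs * c = 0] &
      v = c * cs + f * fs /\ 1 = u + v].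

(* T (with the named elements) is the universal (unital) K-algebra generated
   by u,v,c,f,c^*,f^* subject to the relations: this characterizes
   L_K(E_T) up to isomorphism. *)
Definition toeplitz_universal (K : fieldType) (T : algType K)
    (u v c f cs fs : T) : Prop :=
  forall (A : algType K) (u' v' c' f' cs' fs' : A),
    toeplitz_rels u' v' c' f' cs' fs' ->
    (exists phi : {lrmorphism T -> A},
        [/\ phi u = u', phi v = v', phi c = c' & phi f = f'] /\
        phi cs = cs' /\ phi fs = fs') /\
    (forall phi psi : {lrmorphism T -> A},
        phi u = psi u -> phi v = psi v -> phi c = psi c -> phi f = psi f ->
        phi cs = psi cs -> phi fs = psi fs -> forall x, phi x = psi x).

Definition field_involution (K : fieldType) (conj : {rmorphism K -> K}) : Prop :=
  involutive conj.

Definition star_algebra (K : fieldType) (conj : K -> K) (T : algType K)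
    (star : T -> T) : Prop :=
  [/\ forall x y, star (x + y) = star x + star y,
      forall x y, star (x * y) = star y * star x,
      involutive star &
      forall (k : K) x, star (k *: x) = conj k *: star x].

Definition star_transpose (R : pzRingType) (n : nat) (star : R -> R)
    (M : 'M[R]_n) : 'M[R]_n :=
  \matrix_(i, j) star (M j i).

Definition star_symmetric (R : pzRingType) (star : R -> R) : Prop :=
  forall x : R, exists y : R,
    y * (1 + x * star x) = 1 /\ (1 + x * star x) * y = 1.

Definition is_projection (R : pzRingType) (star : R -> R) (p : R) : Prop :=
  p * p = p /\ star p = p.

Definition rickart_star_ring (R : pzRingType) (star : R -> R) : Prop :=
  forall x : R, exists p : R, is_projection star p /\
    (forall y : R, x * y = 0 <-> exists z : R, y = p * z).

(* The assignment u, f, f^* |-> 0, v |-> 1, c |-> C, c^* |-> C^-1, where C is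
   the companion matrix of t^2 + 3t + 1, satisfies the Toeplitz relations in
   M_2(K), so by universality it extends to an algebra map T -> M_2(K).  Since
   C + C^-1 = -3, this map sends 1 + w w^* to 0 for w = c + v; hence 1 + w w^*
   has no left inverse in T, and T is not *-symmetric.
   In a Rickart *-ring M_n(R) with n >= 2, let P be the projection generating
   the right annihilator of the row (1, a, 0, ..., 0).  The column
   (-a, 1, 0, ..., 0) lies in P M_n(R), while (1, a, 0, ..., 0) P = 0 and
   P = P^*; together these give P_11 (1 + a^* a) = 1.  Taking a = w^* brings
   us back to 1 + w w^*. *)
From HB Require Import structures.
From mathcomp Require Import all_boot all_order all_algebra.
From mathcomp Require Import ring.
Set Implicit Arguments. Unset Strict Implicit. Unset Printing Implicit Defensive.
Import GRing.Theory.
Local Open Scope ring_scope.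

Lemma toeplitz_rels_of_unit (A : pzRingType) (a b : A) :
  a * b = 1 -> b * a = 1 -> toeplitz_rels 0 1 a 0 b 0.
Proof.
move=> ab1 ba1.
by split; split; rewrite ?mul0r ?mulr0 ?mul1r ?mulr1 ?addr0 ?add0r ?ab1.
Qed.

Section CompanionMatrix.
Variable R : comPzRingType.

Definition companion_mx : 'M[R]_2 :=
  \matrix_(i, j) if i == 0 then (if j == 0 then 0 else -1)
                 else (if j == 0 then 1 else -3%:R).

Definition companion_inv_mx : 'M[R]_2 :=
  \matrix_(i, j) if i == 0 then (if j == 0 then -3%:R else 1)
                 else (if j == 0 then -1 else 0).

Ltac entrywise :=
  apply/matrixP => - [[|[|?]] ?] [[|[|?]] ?] //;
  rewrite ?(=^~ mulmxE, mxE, big_ord_recr, big_ord0) /= ?mxE /= ?mulr1n ?mulr0n;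
  ring.

Lemma companion_mulV : companion_mx * companion_inv_mx = 1.
Proof. by entrywise. Qed.

Lemma companion_mulVr : companion_inv_mx * companion_mx = 1.
Proof. by entrywise. Qed.

Lemma companion_addV : companion_mx + companion_inv_mx = - 3%:R.
Proof. by entrywise. Qed.

Lemma companion_one_add_mul :
  1 + (companion_mx + 1) * (companion_inv_mx + 1) = 0.
Proof.
rewrite mulrDr !mulrDl companion_mulV !mul1r mulr1.
rewrite (addrC companion_mx) addrACA (addrC companion_inv_mx) companion_addV.
by rewrite addrA -mulr2n -mulrS subrr.
Qed.

End CompanionMatrix.

Lemma toeplitz_not_left_invertible (K : fieldType) (T : algType K)
    (u v c f cs fs : T) :
  toeplitz_universal u v c f cs fs ->
  forall y : T, y * (1 + (c + v) * (cs + v)) != 1.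
Proof.
move=> univ y; apply/eqP => yinv.
have rels := toeplitz_rels_of_unit (companion_mulV K) (companion_mulVr K).
have [[phi [[_ phiv phic _] [phics _]]] _] := univ _ _ _ _ _ _ _ rels.
have := congr1 phi yinv.
rewrite !(rmorph1, rmorphM, rmorphD) /= phiv phic phics.
by rewrite companion_one_add_mul mulr0 => /esym/eqP; rewrite oner_eq0.
Qed.

Section RickartMatrixRing.
Variables (R : pzRingType) (star : R -> R).
Hypothesis starD : forall x y, star (x + y) = star x + star y.
Hypothesis starM : forall x y, star (x * y) = star y * star x.
Variable m : nat.

Lemma star0 : star 0 = 0.
Proof. by apply: (addrI (star 0)); rewrite -starD !addr0. Qed.

Lemma starN x : star (- x) = - star x.
Proof. by apply: (addrI (star x)); rewrite -starD !subrr star0. Qed.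

Let i1 : 'I_m.+2 := lift ord0 ord0.

Lemma mulmx_entry_first_two (A B : 'M[R]_m.+2) i j :
    (forall k : 'I_m,
      A i (lift ord0 (lift ord0 k)) * B (lift ord0 (lift ord0 k)) j = 0) ->
  (A * B) i j = A i 0 * B 0 j + A i i1 * B i1 j.
Proof. by move=> ABk; rewrite -mulmxE mxE !big_ord_recl big1 ?addr0. Qed.

Definition pair_row (a : R) : 'M[R]_m.+2 :=
  \matrix_(i, j) if i == 0 then (if j == 0 then 1 else if j == i1 then a else 0)
                 else 0.

Definition pair_col (a : R) : 'M[R]_m.+2 :=
  \matrix_(i, j) if j == 0 then (if i == 0 then - a else if i == i1 then 1 else 0)
                 else 0.

Lemma pair_row_supp a i (k : 'I_m) : pair_row a i (lift ord0 (lift ord0 k)) = 0.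
Proof. by rewrite mxE !if_same. Qed.

Lemma pair_col_supp a j (k : 'I_m) : pair_col a (lift ord0 (lift ord0 k)) j = 0.
Proof. by rewrite mxE; case: ifP. Qed.

Lemma pair_row_mul_col a : pair_row a * pair_col a = 0.
Proof.
apply/matrixP => i j.
rewrite mulmx_entry_first_two => [|k]; last by rewrite pair_row_supp mul0r.
rewrite !mxE /=.
by case: (i == 0); case: (j == 0); rewrite ?mulr0 ?mul0r ?addr0 ?mulr1 ?mul1r ?addNr.
Qed.

Lemma rickart_star_one_add_left_inv :
    rickart_star_ring (@star_transpose R m.+2 star) ->
  forall a : R, exists y : R, y * (1 + star a * a) = 1.
Proof.
move=> rickart a; have [P [[PP Pstar] annP]] := rickart (pair_row a).
have starP i j : star (P j i) = P i j by rewrite -[in RHS]Pstar mxE.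
have [Z defY] := (annP (pair_col a)).1 (pair_row_mul_col a).
have PY : P * pair_col a = pair_col a by rewrite defY mulrA PP.
have XP : pair_row a * P = 0 by apply/(annP P).2; exists 1; rewrite mulr1.
have col_eq : P i1 0 * (- a) + P i1 i1 = 1.
  have := congr1 (fun M : 'M[R]_m.+2 => M i1 0) PY.
  rewrite /= mulmx_entry_first_two => [|k]; last by rewrite pair_col_supp mulr0.
  by rewrite !mxE /= mulr1.
have row_eq : P 0 i1 + a * P i1 i1 = 0.
  have := congr1 (fun M : 'M[R]_m.+2 => M 0 i1) XP.
  rewrite /= mulmx_entry_first_two => [|k]; last by rewrite pair_row_supp mul0r.
  by rewrite !mxE /= mul1r.
have P10 : P i1 0 = - (P i1 i1 * star a).
  by rewrite -starP -[P 0 i1]opprK (addr0_eq row_eq) starN starM starP.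
exists (P i1 i1).
by rewrite -[in RHS]col_eq P10 mulNr mulrN opprK mulrDr mulr1 addrC mulrA.
Qed.

End RickartMatrixRing.

Theorem mainTheorem19 (K : fieldType) (conj : {rmorphism K -> K})
    (T : algType K) (u v c f cs fs : T) (star : T -> T) :
  field_involution conj ->
  toeplitz_rels u v c f cs fs ->
  toeplitz_universal u v c f cs fs ->
  star_algebra conj star ->
  star u = u -> star v = v -> star c = cs -> star f = fs ->
  ~ star_symmetric star /\
  (* every n > 1 is written m.+2 *)
  (forall m : nat, ~ rickart_star_ring (@star_transpose T m.+2 star)).
Proof.
move=> _ _ univ [starD starM starK _] _ starv starc _.
have starw : star (c + v) = cs + v by rewrite starD starc starv.
have noinv := toeplitz_not_left_invertible univ.
split.
  move=> /(_ (c + v)) [y [yinv _]].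
  by move: (noinv y); rewrite -starw yinv eqxx.
move=> m /(rickart_star_one_add_left_inv starD starM) /(_ (star (c + v))) [y].
by rewrite starK starw; apply/eqP.
Qed.
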